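(* Let $P$ be a linear process and suppose $P\to^* Q$. Then: (1) $\mathcal{N}(Q)\subseteq\mathcal{N}(P)$; (2) for every $a \in \mathcal{N}(P)\setminus\mathcal{N}(Q)$ there exist processes $P_a, P'_a$ such that $P\to^* P_a\to P'_a\to^* Q$, $a\notin \mathcal{N}(P'_a)$, $\mathcal{N}(P'_a)\cup\{a\}=\mathcal{N}(P_a)$, and $\mathrm{sync}(a,P_a)$.
   Context: Processes: $P ::= \mathbf{0} \mid \alpha.P \mid P\,|\,Q$ where $\alpha$ is a name $a$ or a co-name $\bar a$ (with $\bar{\bar a}=a$). Structural congruence $\equiv$ is the smallest congruence with $P|\mathbf{0}\equiv P$, $P|Q\equiv Q|P$, $P|(Q|R)\equiv(P|Q)|R$. Reduction $\to$ is the smallest relation with $a.P\,|\,\bar a.Q\to P\,|\,Q$, closed under parallel contexts and under $\equiv$; $\to^*$ is its reflexive–transitive closure. A process is linear if each name occurs at most once as an input $a$ and at most once as an output $\bar a$. $\mathcal{N}(P)$ is the set of names occurring in $P$: $\mathcal{N}(\mathbf{0})=\emptyset$, $\mathcal{N}(a.P)=\mathcal{N}(\bar a.P)=\{a\}\cup\mathcal{N}(P)$, $\mathcal{N}(P|Q)=\mathcal{N}(P)\cup\mathcal{N}(Q)$. $\mathrm{sync}(a,P)$ holds iff there exist $P_1,\dots,P_4$ with $P\equiv P_1\,|\,a.P_2$ and $P\equiv P_3\,|\,\bar a.P_4$. *)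

From Stdlib Require Import List.
Import ListNotations.

Inductive act : Type :=
| In : nat -> act
| Out : nat -> act.

Definition co (x : act) : act :=
  match x with In a => Out a | Out a => In a end.

Definition subj (x : act) : nat := match x with In a => a | Out a => a end.

Inductive proc : Type :=
| Nil : proc
| Pre : act -> proc -> proc
| Par : proc -> proc -> proc.

Inductive scong : proc -> proc -> Prop :=
| sc_refl : forall P, scong P P
| sc_sym : forall P Q, scong P Q -> scong Q P
| sc_trans : forall P Q R, scong P Q -> scong Q R -> scong P R
| sc_pre : forall x P Q, scong P Q -> scong (Pre x P) (Pre x Q)
| sc_par : forall P P' Q Q', scong P P' -> scong Q Q' -> scong (Par P Q) (Par P' Q')
| sc_nil : forall P, scong (Par P Nil) P
| sc_comm : forall P Q, scong (Par P Q) (Par Q P)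
| sc_assoc : forall P Q R, scong (Par P (Par Q R)) (Par (Par P Q) R).

Inductive red : proc -> proc -> Prop :=
| red_comm : forall a P Q, red (Par (Pre (In a) P) (Pre (Out a) Q)) (Par P Q)
| red_par : forall P P' Q, red P P' -> red (Par P Q) (Par P' Q)
| red_struct : forall P P' Q Q', scong P P' -> red P' Q' -> scong Q' Q -> red P Q.

Inductive reds : proc -> proc -> Prop :=
| reds_refl : forall P, reds P P
| reds_step : forall P Q R, red P Q -> reds Q R -> reds P R.

Fixpoint names (P : proc) : nat -> Prop :=
  match P with
  | Nil => fun _ => False
  | Pre x P' => fun b => b = subj x \/ names P' b
  | Par P1 P2 => fun b => names P1 b \/ names P2 b
  end.

Fixpoint inputs (P : proc) : list nat :=
  match P with
  | Nil => []
  | Pre (In a) P' => a :: inputs P'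
  | Pre (Out _) P' => inputs P'
  | Par P1 P2 => inputs P1 ++ inputs P2
  end.

Fixpoint outputs (P : proc) : list nat :=
  match P with
  | Nil => []
  | Pre (Out a) P' => a :: outputs P'
  | Pre (In _) P' => outputs P'
  | Par P1 P2 => outputs P1 ++ outputs P2
  end.

Definition linear (P : proc) : Prop := NoDup (inputs P) /\ NoDup (outputs P).

Definition sync (a : nat) (P : proc) : Prop :=
  exists P1 P2 P3 P4,
    scong P (Par P1 (Pre (In a) P2)) /\ scong P (Par P3 (Pre (Out a) P4)).

(* A reduction consumes one complementary pair of prefixes on some name c and
   keeps every other prefix, so it removes at most the name c, and c is
   synchronisable before the step.  Hence names only disappear along
   reductions, and a name a lost along P ->* Q is lost at the last step whose
   source still contains a; that step is the communication on a. *)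

From Stdlib Require Import Classical.

Lemma scong_names (P Q : proc) :
  scong P Q -> forall b, names P b <-> names Q b.
Proof.
  induction 1; intro b; simpl;
    repeat match goal with H : forall b : nat, _ <-> _ |- _ => specialize (H b) end;
    tauto.
Qed.

Lemma scong_par_swap (X Y Z : proc) : scong (Par (Par X Y) Z) (Par (Par X Z) Y).
Proof.
  eapply sc_trans; [apply sc_sym, sc_assoc|].
  eapply sc_trans; [apply sc_par; [apply sc_refl | apply sc_comm]|].
  apply sc_assoc.
Qed.

Lemma sync_par_l (c : nat) (P Q : proc) : sync c P -> sync c (Par P Q).
Proof.
  intros (P1 & P2 & P3 & P4 & HIn & HOut).
  exists (Par P1 Q), P2, (Par P3 Q), P4; split.
  - eapply sc_trans; [apply sc_par; [exact HIn | apply sc_refl]|]; apply scong_par_swap.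
  - eapply sc_trans; [apply sc_par; [exact HOut | apply sc_refl]|]; apply scong_par_swap.
Qed.

Lemma sync_scong (c : nat) (P P' : proc) : scong P P' -> sync c P' -> sync c P.
Proof.
  intros HPP' (P1 & P2 & P3 & P4 & HIn & HOut).
  exists P1, P2, P3, P4; split; eapply sc_trans; eassumption.
Qed.

Lemma red_names_sync (P P' : proc) : red P P' ->
  exists c, (forall b, names P b <-> (names P' b \/ b = c)) /\ sync c P.
Proof.
  induction 1 as [a P Q | P P' Q _ [c [Hnames Hsync]]
                 | P P0 Q0 Q HP _ [c [Hnames Hsync]] HQ].
  - exists a; split.
    + intro b; simpl; tauto.
    + exists (Pre (Out a) Q), P, (Pre (In a) P), Q; split; [apply sc_comm | apply sc_refl].
  - exists c; split.
    + intro b; simpl; rewrite (Hnames b); tauto.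
    + now apply sync_par_l.
  - exists c; split.
    + intro b; rewrite (scong_names _ _ HP b), (Hnames b), (scong_names _ _ HQ b); tauto.
    + now apply sync_scong with P0.
Qed.

Lemma reds_names (P Q : proc) : reds P Q -> forall b, names Q b -> names P b.
Proof.
  induction 1 as [P | P P' Q Hred _ IH]; intros b Hb; auto.
  destruct (red_names_sync _ _ Hred) as [c [Hnames _]].
  apply Hnames; left; auto.
Qed.

Lemma reds_lost_name (P Q : proc) (a : nat) :
  reds P Q -> names P a -> ~ names Q a ->
  exists Pa Pa',
    reds P Pa /\ red Pa Pa' /\ reds Pa' Q /\
    ~ names Pa' a /\
    (forall b, names Pa b <-> (names Pa' b \/ b = a)) /\
    sync a Pa.
Proof.
  intros HPQ; revert a.
  induction HPQ as [P | P P' Q Hred HP'Q IH]; intros a HPa HQa; [contradiction|].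
  destruct (classic (names P' a)) as [HP'a | HP'a].
  - destruct (IH a HP'a HQa) as (Pa & Pa' & HPa' & Hrest).
    exists Pa, Pa'; split; [eapply reds_step; eassumption | exact Hrest].
  - destruct (red_names_sync _ _ Hred) as [c [Hnames Hsync]].
    assert (a = c) as <- by (destruct (proj1 (Hnames a) HPa); tauto).
    exists P, P'; repeat split; auto using reds_refl; apply Hnames.
Qed.

Theorem corollary1 (P Q : proc) :
  linear P -> reds P Q ->
  (forall b, names Q b -> names P b) /\
  (forall a, names P a -> ~ names Q a ->
     exists Pa Pa',
       reds P Pa /\ red Pa Pa' /\ reds Pa' Q /\
       ~ names Pa' a /\
       (forall b, names Pa b <-> (names Pa' b \/ b = a)) /\
       sync a Pa).
Proof.
  intros _ HPQ; split.
  - now apply reds_names.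
  - intros a; now apply reds_lost_name.
Qed.
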